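(* Let $p,q$ be distinct propositional letters and $\alpha:=p\to(q\looparrowright p)$. Then $p\looparrowright p\notin\mathcal{F}\alpha$.
   Context: Language: propositional letters $\Phi=\{p_0,p_1,\dots\}$; connectives $\neg$, $\lor,\wedge,\to,\leftrightarrow,\vartriangle,\looparrowright$; $\mathsf{FOR}$ the set of all formulas. A substitution is an endomorphism of the free formula algebra. An Epstein model is $\langle v,\mathfrak{R}\rangle$ with $v:\Phi\to\{0,1\}$ and $\mathfrak{R}\subseteq\mathsf{FOR}^2$; truth: letters via $v$, boolean connectives classical, $\vartriangle$: both arguments true and pair in $\mathfrak{R}$; $\looparrowright$: material implication true and pair in $\mathfrak{R}$. $\mathcal{F}$ is the least set containing all classical tautologies of this language and the axioms $(p\looparrowright q)\to(p\to q)$, $(p\vartriangle q)\leftrightarrow((p\looparrowright q)\wedge(p\wedge q))$, closed under uniform substitution and modus ponens; for a formula $\alpha$, $\mathcal{F}\alpha$ is the least set containing $\mathcal{F}\cup\{\alpha\}$ closed under uniform substitution and modus ponens. Equivalently, $\varphi\in\mathcal{F}\alpha$ iff $\varphi$ is derivable by modus ponens from $\mathcal{F}$ together with all substitution instances of $\alpha$; and $\mathcal{F}$ is sound and strongly complete for the class of all Epstein models. *)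

Inductive form : Type :=
| Var  : nat -> form
| Neg  : form -> form
| Or   : form -> form -> form
| And  : form -> form -> form
| Imp  : form -> form -> form
| Iff  : form -> form -> form
| Tri  : form -> form -> form
| Loop : form -> form -> form.

Fixpoint subst (s : nat -> form) (f : form) : form :=
  match f with
  | Var n => s n
  | Neg a => Neg (subst s a)
  | Or a b => Or (subst s a) (subst s b)
  | And a b => And (subst s a) (subst s b)
  | Imp a b => Imp (subst s a) (subst s b)
  | Iff a b => Iff (subst s a) (subst s b)
  | Tri a b => Tri (subst s a) (subst s b)
  | Loop a b => Loop (subst s a) (subst s b)
  end.

(* Classical (boolean) evaluation: letters and formulas whose main connective
   is triangle or loop are treated as propositional atoms, valued by h. *)
Fixpoint cev (h : form -> bool) (f : form) : bool :=
  match f with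
  | Var n => h (Var n)
  | Neg a => negb (cev h a)
  | Or a b => orb (cev h a) (cev h b)
  | And a b => andb (cev h a) (cev h b)
  | Imp a b => orb (negb (cev h a)) (cev h b)
  | Iff a b => if cev h a then cev h b else negb (cev h b)
  | Tri a b => h (Tri a b)
  | Loop a b => h (Loop a b)
  end.

Definition classical_tautology (f : form) : Prop :=
  forall h : form -> bool, cev h f = true.

Definition p0 : form := Var 0.
Definition p1 : form := Var 1.

Definition ax_loop : form := Imp (Loop p0 p1) (Imp p0 p1).
Definition ax_tri : form := Iff (Tri p0 p1) (And (Loop p0 p1) (And p0 p1)).

Inductive inF : form -> Prop :=
| F_taut : forall f, classical_tautology f -> inF f
| F_ax_loop : inF ax_loop
| F_ax_tri : inF ax_tri
| F_subst : forall s f, inF f -> inF (subst s f)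
| F_mp : forall f g, inF (Imp f g) -> inF f -> inF g.

Inductive inFa (alpha : form) : form -> Prop :=
| Fa_F : forall f, inF f -> inFa alpha f
| Fa_alpha : inFa alpha alpha
| Fa_subst : forall s f, inFa alpha f -> inFa alpha (subst s f)
| Fa_mp : forall f g, inFa alpha (Imp f g) -> inFa alpha f -> inFa alpha g.

From Stdlib Require Import Bool.

(* Read [a ⊸ b] as [b] and [a △ b] as [a ∧ b]. Under this interpretation all
   axioms of F and the formula [p → (q ⊸ p)] are two-valued tautologies, and
   tautologies are preserved by substitution and modus ponens; but [p ⊸ p]
   becomes [p], which is not a tautology. *)

Fixpoint ev (v : nat -> bool) (f : form) : bool :=
  match f with
  | Var n => v n
  | Neg a => negb (ev v a)
  | Or a b => ev v a || ev v b
  | And a b => ev v a && ev v b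
  | Imp a b => negb (ev v a) || ev v b
  | Iff a b => if ev v a then ev v b else negb (ev v b)
  | Tri a b => ev v a && ev v b
  | Loop _ b => ev v b
  end.

Definition valid (f : form) : Prop := forall v, ev v f = true.

Lemma ev_subst v s f : ev v (subst s f) = ev (fun n => ev v (s n)) f.
Proof. induction f; simpl; try rewrite IHf; try rewrite IHf1; try rewrite IHf2; reflexivity. Qed.

Lemma cev_ev v f : cev (ev v) f = ev v f.
Proof. induction f; simpl; try rewrite IHf; try rewrite IHf1; try rewrite IHf2; reflexivity. Qed.

Lemma valid_tautology f : classical_tautology f -> valid f.
Proof. intros Hf v; rewrite <- cev_ev; apply Hf. Qed.

Lemma valid_subst s f : valid f -> valid (subst s f).
Proof. intros Hf v; rewrite ev_subst; apply Hf. Qed.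

Lemma valid_mp f g : valid (Imp f g) -> valid f -> valid g.
Proof.
  intros Hfg Hf v; specialize (Hfg v); simpl in Hfg.
  rewrite Hf in Hfg; exact Hfg.
Qed.

Lemma inF_valid f : inF f -> valid f.
Proof.
  induction 1.
  - now apply valid_tautology.
  - intro v; simpl; now destruct (v 0), (v 1).
  - intro v; simpl; now destruct (v 0), (v 1).
  - now apply valid_subst.
  - eapply valid_mp; eassumption.
Qed.

Lemma inFa_valid alpha f : valid alpha -> inFa alpha f -> valid f.
Proof.
  intros Halpha; induction 1.
  - now apply inF_valid.
  - exact Halpha.
  - now apply valid_subst.
  - eapply valid_mp; eassumption.
Qed.

Theorem mainTheorem5 (p q : nat) (hpq : p <> q) :
  ~ inFa (Imp (Var p) (Loop (Var q) (Var p))) (Loop (Var p) (Var p)).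
Proof.
  intro Hderiv.
  assert (Halpha : valid (Imp (Var p) (Loop (Var q) (Var p)))).
  { intro v; simpl; now destruct (v p). }
  discriminate (inFa_valid _ _ Halpha Hderiv (fun _ => false)).
Qed.
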